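(* Let $k,l,m,n\in\mathbb{N}$ with $n,k\ge 2$ and $m,l\ge 3$. Then among the four ordered graphs $M_n$, $K_m$, $M^{RL}_k$, $M^{+}_l$, none is an induced ordered subgraph of another one of them. Moreover $\chi(M_n)=n+1$, $\chi(K_m)=m$, $\chi(M^{RL}_k)=2k$ and $\chi(M^{+}_l)=2l$.
   Context: An ordered graph is a triple $G=(V,E,\le_G)$ where $(V,E)$ is a finite simple undirected graph and $\le_G$ is a linear order on $V$. $H$ is an induced ordered subgraph of $G$ if there is an injective order-preserving map $V(H)\to V(G)$ such that two vertices are adjacent in $H$ iff their images are adjacent in $G$. $K_m$ is the complete graph on $m$ linearly ordered vertices. The ordered matching $M_n$ has vertices $a_1<b_1<\dots<a_n<b_n$ and edges $\{a_i,b_i\}$. $M^{RL}_n$ is $M_n$ together with all edges $\{b_i,a_j\}$, $i<j$; $M^{LR}_n$ is $M_n$ together with all edges $\{a_i,b_j\}$, $i<j$; $M^{+}_n=M^{LR}_n\cup M^{RL}_n$. The ordered chromatic number $\chi(G)$ is the minimum number of sets in a partition of $V$ into sets consecutive in $\le_G$ spanning no edge. *)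

From mathcomp Require Import all_boot.
Set Implicit Arguments. Unset Strict Implicit. Unset Printing Implicit Defensive.

(* The field [oedge] lists edges {x,y} as pairs with
   x < y; adjacency [adj] is its symmetric, loop-free closure, so every
   ordered graph is a finite simple undirected graph with a linear order. *)
Record ograph := OGraph { nv : nat; oedge : rel 'I_nv }.

Definition adj (G : ograph) : rel 'I_(nv G) :=
  fun x y => ((x < y) && oedge x y) || ((y < x) && oedge y x).

Definition induced (H G : ograph) : Prop :=
  exists f : 'I_(nv H) -> 'I_(nv G),
    (forall x y : 'I_(nv H), x < y -> f x < f y) /\
    (forall x y : 'I_(nv H), adj (f x) (f y) = adj x y).

(* Vertices of the matchings: 0-based, a_i = 2i, b_i = 2i+1 (i < n),
   so a_0 < b_0 < a_1 < b_1 < ... . *)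
Definition match_edge (n N : nat) (x y : 'I_N) : bool :=
  [exists i : 'I_n, (x == 2 * i :> nat) && (y == (2 * i).+1 :> nat)].
Definition rl_edge (n N : nat) (x y : 'I_N) : bool :=
  [exists i : 'I_n, exists j : 'I_n,
     [&& i < j, x == (2 * i).+1 :> nat & y == 2 * j :> nat]].
Definition lr_edge (n N : nat) (x y : 'I_N) : bool :=
  [exists i : 'I_n, exists j : 'I_n,
     [&& i < j, x == 2 * i :> nat & y == (2 * j).+1 :> nat]].

Definition Mn (n : nat) : ograph :=
  @OGraph (2 * n) (fun x y => match_edge n x y).
Definition Kn (m : nat) : ograph := @OGraph m (fun _ _ => true).
Definition MRL (n : nat) : ograph :=
  @OGraph (2 * n) (fun x y => match_edge n x y || rl_edge n x y).
Definition MLR (n : nat) : ograph :=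
  @OGraph (2 * n) (fun x y => match_edge n x y || lr_edge n x y).
Definition Mplus (n : nat) : ograph :=
  @OGraph (2 * n) (fun x y => [|| match_edge n x y, lr_edge n x y | rl_edge n x y]).

(* A partition of V into (at most) k sets, each consecutive in the order
   and spanning no edge, given as a colouring with k colours whose classes
   are intervals and independent. *)
Definition colorableb (G : ograph) (k : nat) : bool :=
  [exists c : {ffun 'I_(nv G) -> 'I_k},
     [forall x : 'I_(nv G), forall y : 'I_(nv G), forall z : 'I_(nv G),
        [&& x <= y, y <= z & c x == c z] ==> (c y == c x)] &&
     [forall x : 'I_(nv G), forall y : 'I_(nv G), adj x y ==> (c x != c y)]].

Lemma colorable_nv (G : ograph) : colorableb G (nv G).
Proof.
apply/existsP; exists [ffun x => x]; apply/andP; split.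
- apply/forallP=> x; apply/forallP=> y; apply/forallP=> z; rewrite !ffunE.
  apply/implyP=> /and3P[xy yz /eqP xz]; subst z.
  by rewrite -val_eqE /= eqn_leq yz xy.
- apply/forallP=> x; apply/forallP=> y; rewrite !ffunE.
  apply/implyP; rewrite /adj -val_eqE /= neq_ltn.
  by case/orP=> /andP[-> _]; rewrite ?orbT.
Qed.

Definition ochi (G : ograph) : nat := ex_minn (ex_intro (colorableb G) _ (colorable_nv G)).

From mathcomp Require Import all_boot zify.
Set Implicit Arguments. Unset Strict Implicit. Unset Printing Implicit Defensive.

(* Numbering vertices from 0 (a_i = 2i, b_i = 2i+1), adjacency of u < v
   depends only on parities: in M_n, u is even and v = u+1; in M^RL, in
   addition, u odd and v even; in M^+, u and v of different parities.  Hence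
   M_n, M^RL and M^+ are bipartite and contain no triangle, while the
   non-adjacent a_0, a_1 keep them out of K_m.  M^RL_2 and M^+_2 have a vertex
   b_0 with two neighbours, impossible in a matching.  Induced subgraphs of
   M^+ are complete bipartite, which M_2 and M^RL_2 are not.  In M^RL an odd
   vertex sees every later even vertex, which rules out M_2 (each of its edges
   has an odd and an even end), and an edge u < v with v > u+1 goes from odd
   to even; in M^+_3 the edges a_0 b_1 and b_0 a_2 are of that kind, making
   a_0 and b_0 odd, yet a_0 b_0 is an edge.

   Colour classes are intervals, so vertices g_0 < ... < g_(p-1) with an edge
   between any two of them force p colours.  In K_m, M^RL and M^+ consecutive
   vertices are adjacent; in M_n take a_0, b_0, ..., b_(n-1), while colouring
   v by ceil(v/2) uses n+1 colours. *)

Definition matching_rel : rel nat := fun u v => ~~ odd u && (v == u.+1).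
Definition complete_rel : rel nat := fun _ _ => true.
Definition rl_rel : rel nat := fun u v => matching_rel u v || odd u && ~~ odd v.
Definition plus_rel : rel nat := fun u v => odd u != odd v.

Definition adj_lt (G : ograph) (E : rel nat) :=
  forall x y : 'I_(nv G), x < y -> adj x y = E x y.

Lemma adj_lt_of_oedge (G : ograph) (E : rel nat) :
  (forall x y : 'I_(nv G), x < y -> oedge x y = E x y) -> adj_lt G E.
Proof.
by move=> oedgeE x y xy; rewrite /adj xy oedgeE // ltnNge (ltnW xy) orbF.
Qed.

Lemma half_lt n (x : 'I_(2 * n)) : x./2 < n.
Proof. have := ltn_ord x; lia. Qed.

Lemma match_edgeE n (x y : 'I_(2 * n)) : match_edge n x y = matching_rel x y.
Proof.
apply/existsP/andP => [[i /andP[/eqP -> /eqP ->]]|[evx /eqP ->]]; first by split; lia.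
by exists (Ordinal (half_lt x)); apply/andP; split; apply/eqP => /=; lia.
Qed.

Lemma rl_edgeE n (x y : 'I_(2 * n)) : x < y -> rl_edge n x y = odd x && ~~ odd y.
Proof.
move=> xy; apply/existsP/andP => [[i /existsP[j /and3P[_ /eqP -> /eqP ->]]]|[oddx evy]].
  by split; lia.
exists (Ordinal (half_lt x)); apply/existsP; exists (Ordinal (half_lt y)).
by apply/and3P; split; rewrite //=; try apply/eqP; lia.
Qed.

Lemma lr_edgeE n (x y : 'I_(2 * n)) : x < y -> lr_edge n x y = [&& ~~ odd x, odd y & x.+1 < y].
Proof.
move=> xy; apply/existsP/and3P => [[i /existsP[j /and3P[ij /eqP -> /eqP ->]]]|[evx oddy xy1]].
  by split; lia.
exists (Ordinal (half_lt x)); apply/existsP; exists (Ordinal (half_lt y)).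
by apply/and3P; split; rewrite //=; try apply/eqP; lia.
Qed.

Lemma adj_Mn n : adj_lt (Mn n) matching_rel.
Proof. by apply: adj_lt_of_oedge => x y _; apply: match_edgeE. Qed.

Lemma adj_Kn m : adj_lt (Kn m) complete_rel.
Proof. exact: adj_lt_of_oedge. Qed.

Lemma adj_MRL n : adj_lt (MRL n) rl_rel.
Proof. by apply: adj_lt_of_oedge => x y xy /=; rewrite match_edgeE rl_edgeE. Qed.

Lemma adj_Mplus n : adj_lt (Mplus n) plus_rel.
Proof.
apply: adj_lt_of_oedge => x y xy /=; rewrite match_edgeE lr_edgeE // rl_edgeE //.
(* x and y now occur as ordinals of both 'I_(nv (Mplus n)) and 'I_(2 * n),
   which lia would take for different atoms. *)
by case: x y xy => [x _] [y _] /= xy; rewrite /matching_rel /plus_rel; lia.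
Qed.

Definition embeds (N : nat) (EH EG : rel nat) :=
  exists F : nat -> nat,
    (forall a b, a < b < N -> F a < F b) /\
    (forall a b, a < b < N -> EG (F a) (F b) = EH a b).

Lemma embedsW M N (EH EG : rel nat) : M <= N -> embeds N EH EG -> embeds M EH EG.
Proof.
move=> MN [F [F_mono F_rel]]; exists F.
by split=> a b /andP[ab bM]; [apply: F_mono | apply: F_rel]; rewrite ab (leq_trans bM).
Qed.

Lemma induced_embeds (H G : ograph) (EH EG : rel nat) :
  adj_lt H EH -> adj_lt G EG -> induced H G -> embeds (nv H) EH EG.
Proof.
move=> adjH adjG [f [f_mono f_adj]].
exists (fun a => oapp (fun x => val (f x)) 0 (insub a)).
split=> a b /andP[ab bN]; have aN := ltn_trans ab bN;
  rewrite (insubT (fun i => i < nv H) aN) (insubT (fun i => i < nv H) bN) /=.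
  exact: f_mono.
by rewrite -adjG ?f_adj ?adjH //; apply: f_mono.
Qed.

Lemma not_induced (H G : ograph) (EH EG : rel nat) N :
  adj_lt H EH -> adj_lt G EG -> N <= nv H -> ~ embeds N EH EG -> ~ induced H G.
Proof. by move=> adjH adjG NH noemb /(induced_embeds adjH adjG)/(embedsW NH). Qed.

Lemma complete_not_embeds N (EH : rel nat) a b :
  a < b < N -> ~~ EH a b -> ~ embeds N EH complete_rel.
Proof. by move=> abN nab [F [_ F_rel]]; move: nab; rewrite -F_rel. Qed.

Definition parity_bipartite (E : rel nat) :=
  forall u v, u < v -> E u v -> odd u != odd v.

Lemma matching_parity_bipartite : parity_bipartite matching_rel.
Proof. by move=> u v _ /andP[_ /eqP ->] /=; case: (odd u). Qed.

Lemma rl_parity_bipartite : parity_bipartite rl_rel.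
Proof.
by move=> u v uv /orP[/(matching_parity_bipartite uv) //|/andP[-> /negbTE ->]].
Qed.

Lemma plus_parity_bipartite : parity_bipartite plus_rel.
Proof. by []. Qed.

Lemma triangle_not_embeds (EG : rel nat) : parity_bipartite EG -> ~ embeds 3 complete_rel EG.
Proof.
move=> EG_bip [F [F_mono F_rel]].
have edge a b : a < b < 3 -> odd (F a) != odd (F b).
  by move=> abN; apply: EG_bip; [apply: F_mono | rewrite F_rel].
move: (edge 0 1 erefl) (edge 1 2 erefl) (edge 0 2 erefl).
by case: (odd (F 0)); case: (odd (F 1)); case: (odd (F 2)).
Qed.

Lemma matching_not_embeds_path (EH : rel nat) :
  EH 0 1 -> EH 1 2 -> ~ embeds 3 EH matching_rel.
Proof.
move=> e01 e12 [F [F_mono F_rel]].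
move: (F_rel 0 1 erefl) (F_rel 1 2 erefl); rewrite e01 e12 /matching_rel; lia.
Qed.

Lemma rl_odd_even u v : odd u -> ~~ odd v -> rl_rel u v.
Proof. by move=> ou ev; rewrite /rl_rel ou ev orbT. Qed.

Lemma matching_not_embeds_rl : ~ embeds 4 matching_rel rl_rel.
Proof.
move=> [F [F_mono F_rel]].
have edge a b : a < b < 4 -> matching_rel a b -> odd (F a) != odd (F b).
  by move=> abN ab; apply: rl_parity_bipartite; [apply: F_mono | rewrite F_rel].
have cross a b : a < 2 -> 2 <= b < 4 -> ~~ (odd (F a) && ~~ odd (F b)).
  move=> a2 /andP[b2 b4]; have abN : a < b < 4 by rewrite b4 (leq_trans a2 b2).
  apply/negP => /andP[oa eb]; move: (rl_odd_even oa eb).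
  by rewrite F_rel // /matching_rel; lia.
move: (edge 0 1 erefl erefl) (edge 2 3 erefl erefl).
move: (cross 0 2 erefl erefl) (cross 0 3 erefl erefl).
move: (cross 1 2 erefl erefl) (cross 1 3 erefl erefl).
by case: (odd (F 0)); case: (odd (F 1)); case: (odd (F 2)); case: (odd (F 3)).
Qed.

Lemma embeds_plus_bipartite N (EH : rel nat) : embeds N EH plus_rel ->
  exists p : nat -> bool, forall a b, a < b < N -> EH a b = (p a != p b).
Proof. by move=> [F [_ F_rel]]; exists (odd \o F) => a b abN; rewrite -F_rel. Qed.

Lemma matching_not_embeds_plus : ~ embeds 4 matching_rel plus_rel.
Proof.
move=> /embeds_plus_bipartite[p p_rel].
move: (p_rel 0 1 erefl) (p_rel 2 3 erefl) (p_rel 0 2 erefl) (p_rel 0 3 erefl).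
by case: (p 0); case: (p 1); case: (p 2); case: (p 3).
Qed.

Lemma rl_not_embeds_plus : ~ embeds 4 rl_rel plus_rel.
Proof.
move=> /embeds_plus_bipartite[p p_rel].
move: (p_rel 0 1 erefl) (p_rel 1 2 erefl) (p_rel 2 3 erefl) (p_rel 0 3 erefl).
by case: (p 0); case: (p 1); case: (p 2); case: (p 3).
Qed.

Lemma rl_long_edge u v : u.+1 < v -> rl_rel u v -> odd u && ~~ odd v.
Proof. by rewrite /rl_rel /matching_rel => uv /orP[/andP[_ /eqP vE]|//]; lia. Qed.

Lemma plus_not_embeds_rl : ~ embeds 5 plus_rel rl_rel.
Proof.
move=> [F [F_mono F_rel]].
have [odd0 _] : odd (F 0) /\ ~~ odd (F 3).
  apply/andP/rl_long_edge; last by rewrite F_rel.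
  by move: (F_mono 0 1 erefl) (F_mono 1 3 erefl); lia.
have [odd1 _] : odd (F 1) /\ ~~ odd (F 4).
  apply/andP/rl_long_edge; last by rewrite F_rel.
  by move: (F_mono 1 2 erefl) (F_mono 2 4 erefl); lia.
by move: (F_rel 0 1 erefl); rewrite /rl_rel /matching_rel odd0 odd1.
Qed.

Definition interval_coloring (G : ograph) k (c : 'I_(nv G) -> 'I_k) :=
  (forall x y z : 'I_(nv G), x <= y <= z -> c x = c z -> c y = c x) /\
  (forall x y : 'I_(nv G), adj x y -> c x != c y).

Lemma colorableP (G : ograph) k :
  reflect (exists c : 'I_(nv G) -> 'I_k, interval_coloring c) (colorableb G k).
Proof.
apply: (iffP existsP) => [[c /andP[/forallP c_int /forallP c_proper]]|[c [c_int c_proper]]].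
  exists c; split=> [x y z /andP[xy yz] cxz|x y].
    by move: (c_int x) => /forallP/(_ y)/forallP/(_ z); rewrite xy yz cxz eqxx => /eqP.
  by move: (c_proper x) => /forallP/(_ y)/implyP.
exists [ffun x => c x]; apply/andP; split; apply/forallP=> x; apply/forallP=> y.
  apply/forallP=> z; rewrite !ffunE; apply/implyP => /and3P[xy yz /eqP cxz].
  by apply/eqP; apply: (c_int x y z); rewrite ?xy.
by rewrite !ffunE; apply/implyP/c_proper.
Qed.

Lemma colorable_lb (G : ograph) k p (g : 'I_p -> 'I_(nv G)) :
  (forall i j : 'I_p, i < j ->
     exists x y : 'I_(nv G), [/\ g i <= x, x < y, y <= g j & adj x y]) ->
  colorableb G k -> p <= k.
Proof.
move=> g_sep /colorableP[c [c_int c_proper]].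
have c_sep (i j : 'I_p) : i < j -> c (g i) != c (g j).
  move=> ij; apply/eqP => cij.
  have [x [y [ix xy yj xy_adj]]] := g_sep i j ij.
  have cx : c x = c (g i) by apply: (c_int _ _ (g j)); rewrite ?ix ?(leq_trans (ltnW xy)).
  have cy : c y = c (g i) by apply: (c_int _ _ (g j)); rewrite ?yj ?(leq_trans ix (ltnW xy)).
  by move: (c_proper x y xy_adj); rewrite cx cy eqxx.
have c_inj : injective (c \o g).
  move=> i j /= cij; case: (ltngtP i j) => [ij|ji|/val_inj //].
    by move: (c_sep _ _ ij); rewrite cij eqxx.
  by move: (c_sep _ _ ji); rewrite cij eqxx.
by have := leq_card _ c_inj; rewrite !card_ord.
Qed.

Lemma ochiE (G : ograph) t :
  colorableb G t -> (forall k, colorableb G k -> t <= k) -> ochi G = t.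
Proof.
move=> Gt t_min; rewrite /ochi; case: ex_minnP => c Gc c_min.
by apply/eqP; rewrite eqn_leq c_min // t_min.
Qed.

Lemma ochi_consecutive (G : ograph) (E : rel nat) :
  adj_lt G E -> (forall u, E u u.+1) -> ochi G = nv G.
Proof.
move=> adjG E_succ; apply: ochiE; first exact: colorable_nv.
move=> k; apply: (@colorable_lb G k (nv G) id) => i j ij.
have i1 : i.+1 < nv G by apply: leq_trans (ltn_ord j).
by exists i, (Ordinal i1); split; rewrite //= adjG /=.
Qed.

Lemma ochi_Kn m : ochi (Kn m) = m.
Proof. exact: (ochi_consecutive (@adj_Kn m)). Qed.

Lemma ochi_MRL n : ochi (MRL n) = 2 * n.
Proof.
apply: (ochi_consecutive (@adj_MRL n)) => u.
by rewrite /rl_rel /matching_rel /= eqxx; case: (odd u).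
Qed.

Lemma ochi_Mplus n : ochi (Mplus n) = 2 * n.
Proof. by apply: (ochi_consecutive (@adj_Mplus n)) => u; rewrite /plus_rel /=; case: (odd u). Qed.

Lemma colorable_Mn n : colorableb (Mn n) n.+1.
Proof.
have colour_lt (x : 'I_(nv (Mn n))) : x.+1 %/ 2 < n.+1.
  by have := ltn_ord x; rewrite /=; lia.
apply/colorableP; exists (fun x => inord (x.+1 %/ 2)); split=> [x y z|x y].
  move=> xyz /(congr1 (@nat_of_ord _)); rewrite !inordK // => xz.
  by apply: ord_inj; rewrite !inordK //; lia.
rewrite -val_eqE /= !inordK // /adj /= !match_edgeE /matching_rel; lia.
Qed.

Lemma ochi_Mn n : 0 < n -> ochi (Mn n) = n.+1.
Proof.
move=> n_gt0; apply: ochiE => [|k]; first exact: colorable_Mn.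
have g_lt (i : 'I_n.+1) : (2 * i).-1 < nv (Mn n) by have := ltn_ord i; rewrite /=; lia.
apply: (@colorable_lb _ k n.+1 (fun i => Ordinal (g_lt i))) => i j ij.
have a_lt : (2 * j).-2 < nv (Mn n) by have := ltn_ord j; rewrite /=; lia.
have b_lt : (2 * j).-1 < nv (Mn n) by have := ltn_ord j; rewrite /=; lia.
exists (Ordinal a_lt), (Ordinal b_lt).
by split; rewrite /= ?adj_Mn /= /matching_rel; lia.
Qed.

Theorem proposition2 (k l m n : nat) :
  2 <= n -> 2 <= k -> 3 <= m -> 3 <= l ->
  (forall i j : 'I_4, i != j ->
     ~ induced (nth (Kn 0) [:: Mn n; Kn m; MRL k; Mplus l] i)
               (nth (Kn 0) [:: Mn n; Kn m; MRL k; Mplus l] j)) /\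
  ochi (Mn n) = n.+1 /\ ochi (Kn m) = m /\
  ochi (MRL k) = 2 * k /\ ochi (Mplus l) = 2 * l.
Proof.
move=> n2 k2 m3 l3; split; last first.
  by rewrite ochi_Mn ?ochi_Kn ?ochi_MRL ?ochi_Mplus // (leq_trans _ n2).
have Mn_adj := @adj_Mn n; have Kn_adj := @adj_Kn m.
have MRL_adj := @adj_MRL k; have Mplus_adj := @adj_Mplus l.
move=> [[|[|[|[|i]]]] ?] [[|[|[|[|j]]]] ?] //= _.
- apply: (not_induced Mn_adj Kn_adj _
          (@complete_not_embeds 3 matching_rel 0 2 erefl erefl)) => /=; lia.
- by apply: (not_induced Mn_adj MRL_adj _ matching_not_embeds_rl) => /=; lia.
- by apply: (not_induced Mn_adj Mplus_adj _ matching_not_embeds_plus) => /=; lia.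
- exact: (not_induced Kn_adj Mn_adj m3 (triangle_not_embeds matching_parity_bipartite)).
- exact: (not_induced Kn_adj MRL_adj m3 (triangle_not_embeds rl_parity_bipartite)).
- exact: (not_induced Kn_adj Mplus_adj m3 (triangle_not_embeds plus_parity_bipartite)).
- apply: (not_induced MRL_adj Mn_adj _
          (@matching_not_embeds_path rl_rel erefl erefl)) => /=; lia.
- apply: (not_induced MRL_adj Kn_adj _
          (@complete_not_embeds 3 rl_rel 0 2 erefl erefl)) => /=; lia.
- by apply: (not_induced MRL_adj Mplus_adj _ rl_not_embeds_plus) => /=; lia.
- apply: (not_induced Mplus_adj Mn_adj _
          (@matching_not_embeds_path plus_rel erefl erefl)) => /=; lia.
- apply: (not_induced Mplus_adj Kn_adj _
          (@complete_not_embeds 3 plus_rel 0 2 erefl erefl)) => /=; lia.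
- by apply: (not_induced Mplus_adj MRL_adj _ plus_not_embeds_rl) => /=; lia.
Qed.
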